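(* Let $H$ be a real, separable, infinite-dimensional Hilbert space and $|\cdot|$ a measurable norm on $H$. Let $K$ be a closed convex subset of $H$ and $p\in H$ a point outside $K$. Then there is a measurably adapted sequence of finite-dimensional subspaces $F_1\subset F_2\subset\cdots\subset H$ with $p\in F_1$ such that $(p+F_n^\perp)\cap K=\emptyset$ for each $n\geq1$. Moreover, $p\notin\mathrm{pr}_{F_n}(K)$ for all $n\ge1$, where $\mathrm{pr}_{F_n}$ is the orthogonal projection of $H$ onto $F_n$.
   Context: A norm $|\cdot|$ on $H$ is a measurable norm if for every $\epsilon>0$ there is a finite-dimensional subspace $F_0\subset H$ such that $\mathrm{Gauss}[v\in F_1: |v|>\epsilon]<\epsilon$ for every finite-dimensional subspace $F_1\subset H$ orthogonal to $F_0$ ($\mathrm{Gauss}$ = standard Gaussian measure on $F_1$). A sequence $(F_n)_{n\geq1}$ of closed subspaces of $H$ is measurably adapted if: (i) $F_1\subset F_2\subset\cdots$; (ii) $1\leq\dim(F_{n+1}\cap F_n^\perp)<\infty$ for all $n$; (iii) $\bigcup_n F_n$ is dense in $H$; (iv) $\mathrm{Gauss}[v\in F_{n+1}\cap F_n^\perp: |v|>2^{-n}]<2^{-n}$ for every $n\ge1$. *)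

From HB Require Import structures.
From mathcomp Require Import all_boot all_order all_algebra.
From mathcomp Require Import all_classical all_reals all_analysis.

Set Implicit Arguments.
Unset Strict Implicit.
Unset Printing Implicit Defensive.

Import Order.TTheory GRing.Theory Num.Theory.
Local Open Scope classical_set_scope.
Local Open Scope ring_scope.

Section Hilbert.
Variables (R : realType) (V : lmodType R) (ip : V -> V -> R).

Definition hnorm (v : V) : R := Num.sqrt (ip v v).

Definition inner_product_axioms : Prop :=
  [/\ (forall u v, ip u v = ip v u),
      (forall a u v w, ip (a *: u + v) w = a * ip u w + ip v w),
      (forall v, 0 <= ip v v) &
      (forall v, ip v v = 0 -> v = 0)].

Definition lincomb (e : seq V) (x : seq R) : V :=
  \sum_(i < size e) x`_i *: e`_i.

Definition span (s : seq V) : set V :=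
  [set v | exists x : seq R, v = lincomb s x].

Definition complete_ip : Prop :=
  forall u : nat -> V,
    (forall eps : R, 0 < eps -> exists N, forall m n, (N <= m)%N -> (N <= n)%N ->
        hnorm (u m - u n) < eps) ->
    exists l : V, forall eps : R, 0 < eps -> exists N, forall n, (N <= n)%N ->
        hnorm (u n - l) < eps.

Definition separable_ip : Prop :=
  exists u : nat -> V, forall x eps, 0 < eps -> exists n, hnorm (x - u n) < eps.

Definition infinite_dimensional : Prop := ~ exists s : seq V, span s = setT.

Definition hilbert_space : Prop :=
  [/\ inner_product_axioms, complete_ip, separable_ip & infinite_dimensional].

Definition hclosed (A : set V) : Prop :=
  forall x, ~ A x -> exists2 r : R, 0 < r & forall y, hnorm (y - x) < r -> ~ A y.

Definition linear_subspace (F : set V) : Prop :=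
  [/\ F 0, (forall u v, F u -> F v -> F (u + v)) & (forall (a : R) u, F u -> F (a *: u))].

Definition closed_subspace (F : set V) : Prop := linear_subspace F /\ hclosed F.

Definition finite_dim_subspace (F : set V) : Prop := exists s : seq V, F = span s.

Definition orthocomp (F : set V) : set V := [set v | forall u, F u -> ip u v = 0].

Definition orthogonal_sets (F G : set V) : Prop :=
  forall u v, F u -> G v -> ip u v = 0.

Definition orthonormal (e : seq V) : Prop :=
  forall i j, (i < size e)%N -> (j < size e)%N ->
    ip e`_i e`_j = (if i == j then 1 else 0).

Definition orthonormal_basis (e : seq V) (F : set V) : Prop :=
  orthonormal e /\ span e = F.

Definition is_orth_proj (F : set V) (x y : V) : Prop := F y /\ orthocomp F (x - y).

Definition proj_image (F : set V) (K : set V) : set V :=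
  [set y | exists2 x, K x & is_orth_proj F x y].

Definition is_norm (N : V -> R) : Prop :=
  [/\ (forall u v, N (u + v) <= N u + N v),
      (forall (a : R) v, N (a *: v) = `|a| * N v) &
      (forall v, N v = 0 -> v = 0)].

End Hilbert.

(** Integration against the standard Gaussian measure on R^k, written as
    an iterated integral against the 1-dimensional standard normal law. *)
Fixpoint gauss_int (R : realType) (k : nat) (f : seq R -> \bar R) : \bar R :=
  match k with
  | 0 => f [::]
  | k'.+1 => (\int[normal_prob 0 1]_x gauss_int k' (fun s => f (x :: s)))%E
  end.

(** Gauss[v in F : P v] where e is an orthonormal basis of the
    finite-dimensional subspace F: the standard Gaussian measure on F
    is the image of the standard Gaussian on R^(size e) by x |-> sum x_i e_i. *)
Definition gauss_prob (R : realType) (V : lmodType R) (e : seq V) (P : set V)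
  : \bar R :=
  gauss_int (size e) (fun x => (\1_[set y | P (lincomb e y)] x)%:E).

Section Measurable.
Variables (R : realType) (V : lmodType R) (ip : V -> V -> R) (N : V -> R).

Definition measurable_norm : Prop :=
  is_norm N /\
  forall eps : R, 0 < eps ->
    exists F0 : set V, finite_dim_subspace F0 /\
      forall F1 : set V, finite_dim_subspace F1 -> orthogonal_sets ip F1 F0 ->
        forall e, orthonormal_basis ip e F1 ->
          (gauss_prob e [set v | (eps < N v)%R] < eps%:E)%E.

(** measurably adapted sequence (F_n)_{n >= 1}; F 0 is irrelevant *)
Definition measurably_adapted (F : nat -> set V) : Prop :=
  [/\ (forall n, (1 <= n)%N -> closed_subspace ip (F n)),
      (forall n, (1 <= n)%N -> F n `<=` F n.+1),
      (forall n, (1 <= n)%N ->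
          finite_dim_subspace (F n.+1 `&` orthocomp ip (F n)) /\
          exists2 v, (F n.+1 `&` orthocomp ip (F n)) v & v <> 0),
      (forall x eps, 0 < eps -> exists n, (1 <= n)%N /\
          exists2 y, F n y & hnorm ip (x - y) < eps) &
      (forall n, (1 <= n)%N ->
          forall e, orthonormal_basis ip e (F n.+1 `&` orthocomp ip (F n)) ->
            (gauss_prob e [set v | (2%:R ^- n < N v)%R] < (2%:R ^- n)%:E)%E)].

End Measurable.

From Pilot Require Import Defs.
From HB Require Import structures.
From mathcomp Require Import all_boot all_order all_algebra.
From mathcomp Require Import all_classical all_reals all_analysis.
From mathcomp Require Import ring lra.
Import Order.TTheory GRing.Theory Num.Theory.
Local Open Scope classical_set_scope.
Local Open Scope ring_scope.
Set Implicit Arguments. Unset Strict Implicit.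
Local Notation span := Defs.span.

(* The nearest point q of K to p satisfies <p - q, x - q> <= 0 on K, so the
   direction d = q - p has <d, x - p> >= |p - q|^2 > 0 for every x in K.  Hence
   no x in K has x - p orthogonal to a subspace containing d, which yields both
   conclusions once d lies in F_1.  The F_n are the spans of a growing finite
   list which at step n absorbs p, d, the n-th term of a dense sequence, a
   vector outside the previous span (available in infinite dimension, it makes
   the increments nonzero), and a finite-dimensional subspace F_0 witnessing the
   measurability of the norm at precision 2^-n, to which the next increment
   F_(n+1) /\ F_n^perp is then orthogonal. *)

Section InnerProduct.
Variables (R : realType) (V : lmodType R) (ip : V -> V -> R).
Hypothesis ipA : inner_product_axioms ip.

Lemma ipC u v : ip u v = ip v u.
Proof. by case: ipA. Qed.

Lemma ip_ge0 v : 0 <= ip v v.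
Proof. by case: ipA. Qed.

Lemma ip_eq0 v : ip v v = 0 -> v = 0.
Proof. by case: ipA => _ _ _; apply. Qed.

Lemma ip_gt0 v : v <> 0 -> 0 < ip v v.
Proof. by move=> v0; rewrite lt_def ip_ge0 andbT; apply/eqP => /ip_eq0/v0. Qed.

Lemma ipDl u v w : ip (u + v) w = ip u w + ip v w.
Proof. by case: ipA => _ ipDZ _ _; rewrite -[in LHS](scale1r u) ipDZ mul1r. Qed.

Lemma ip0l w : ip 0 w = 0.
Proof. by case: ipA => _ ipDZ _ _; move: (ipDZ 1 0 0 w); rewrite scaler0 addr0 mul1r => h; lra. Qed.

Lemma ipZl a u w : ip (a *: u) w = a * ip u w.
Proof. by case: ipA => _ ipDZ _ _; rewrite -[in LHS](addr0 (a *: u)) ipDZ ip0l addr0. Qed.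

Lemma ipNl u w : ip (- u) w = - ip u w.
Proof. by rewrite -scaleN1r ipZl mulN1r. Qed.

Lemma ipDr u v w : ip w (u + v) = ip w u + ip w v.
Proof. by rewrite ipC ipDl !(ipC w). Qed.

Lemma ipZr a u w : ip w (a *: u) = a * ip w u.
Proof. by rewrite ipC ipZl ipC. Qed.

Lemma ipNr u w : ip w (- u) = - ip w u.
Proof. by rewrite ipC ipNl ipC. Qed.

Lemma ipBr u v w : ip w (u - v) = ip w u - ip w v.
Proof. by rewrite ipDr ipNr. Qed.

Lemma ip0r w : ip w 0 = 0.
Proof. by rewrite ipC ip0l. Qed.

Lemma ip_normD u v : ip (u + v) (u + v) = ip u u + 2 * ip u v + ip v v.
Proof. by rewrite ipDl !ipDr (ipC v u); ring. Qed.

Lemma ip_normB u v : ip (u - v) (u - v) = ip u u - 2 * ip u v + ip v v.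
Proof. by rewrite ip_normD ipNr ipNl ipNr opprK; ring. Qed.

Lemma ip_normZ a u : ip (a *: u) (a *: u) = a ^+ 2 * ip u u.
Proof. by rewrite ipZl ipZr mulrA expr2. Qed.

Lemma ip_normD_le s u v : 0 < s ->
  ip (u + v) (u + v) <= (1 + s) * ip u u + (1 + s^-1) * ip v v.
Proof.
move=> s0; have := ip_ge0 (s *: u - v); rewrite ip_normB ip_normZ ipZl => h.
have cross : 2 * ip u v <= s * ip u u + s^-1 * ip v v.
  rewrite -(ler_pM2l s0) mulrDr mulVKf ?gt_eqF //.
  by move: h; rewrite expr2; lra.
by rewrite ip_normD; lra.
Qed.

Lemma hnorm_lt v e : 0 < e -> (hnorm ip v < e) = (ip v v < e ^+ 2).
Proof.
move=> e0; rewrite /hnorm -[in LHS](ger0_norm (ltW e0)) -sqrtr_sqr.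
by rewrite ltr_sqrt ?exprn_gt0.
Qed.

End InnerProduct.

Section Subspaces.
Variables (R : realType) (V : lmodType R) (ip : V -> V -> R).
Hypothesis ipA : inner_product_axioms ip.

Lemma linear_subspaceB (F : set V) u v :
  linear_subspace F -> F u -> F v -> F (u - v).
Proof. by case=> _ FD FZ Fu Fv; rewrite -scaleN1r; apply: FD => //; apply: FZ. Qed.

Lemma linear_subspace_sum (F : set V) n (f : nat -> R) (g : nat -> V) :
  linear_subspace F -> (forall i, (i < n)%N -> F (g i)) ->
  F (\sum_(i < n) f i *: g i).
Proof.
case=> F0 FD FZ; elim: n => [|n IH] Fg; first by rewrite big_ord0.
rewrite big_ord_recr /=; apply: FD; last by apply/FZ/Fg.
by apply: IH => i /ltnW; apply: Fg.
Qed.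

Lemma linear_subspaceI (F G : set V) :
  linear_subspace F -> linear_subspace G -> linear_subspace (F `&` G).
Proof.
case=> F0 FD FZ [G0 GD GZ]; split => //.
- by move=> u v [? ?] [? ?]; split; [apply: FD | apply: GD].
- by move=> a u [? ?]; split; [apply: FZ | apply: GZ].
Qed.

Lemma linear_subspace_orthocomp (F : set V) : linear_subspace (orthocomp ip F).
Proof.
split => [u _|u v hu hv w Fw|a u hu w Fw]; first by rewrite ip0r.
  by rewrite (ipDr ipA) hu // hv // addr0.
by rewrite (ipZr ipA) hu // mulr0.
Qed.

Lemma spanE (s : seq V) v :
  span s v <-> exists f : nat -> R, v = \sum_(i < size s) f i *: s`_i.
Proof.
split=> [[x ->]|[f ->]]; first by exists (fun i => x`_i).
exists (mkseq f (size s)); apply: eq_bigr => i _.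
by rewrite nth_mkseq.
Qed.

Lemma linear_subspace_span (s : seq V) : linear_subspace (span s).
Proof.
split.
- by apply/spanE; exists (fun=> 0); rewrite big1 // => i _; rewrite scale0r.
- move=> u v /spanE[f ->] /spanE[g ->]; apply/spanE; exists (fun i => f i + g i).
  by rewrite -big_split /=; apply: eq_bigr => i _; rewrite scalerDl.
- move=> a u /spanE[f ->]; apply/spanE; exists (fun i => a * f i).
  by rewrite scaler_sumr; apply: eq_bigr => i _; rewrite scalerA.
Qed.

Lemma span_nth (s : seq V) i : (i < size s)%N -> span s s`_i.
Proof.
move=> hi; apply/spanE; exists (fun j => (j == i)%:R).
rewrite (bigD1 (Ordinal hi)) //= eqxx scale1r big1 ?addr0 // => j ji.
by rewrite (_ : (j == i :> nat) = false) ?scale0r //; apply/negbTE; rewrite -val_eqE in ji.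
Qed.

Lemma span_subset (s : seq V) (F : set V) :
  linear_subspace F -> (forall i, (i < size s)%N -> F s`_i) -> span s `<=` F.
Proof. by move=> Flin Fs v /spanE[f ->]; exact: (@linear_subspace_sum F _ f (fun i => s`_i)). Qed.

Lemma mem_span (s : seq V) v : v \in s -> span s v.
Proof. by move=> sv; rewrite -(nth_index 0 sv); apply: span_nth; rewrite index_mem. Qed.

Lemma span_subseq (s t : seq V) : {subset s <= t} -> span s `<=` span t.
Proof.
move=> st; apply: span_subset; first exact: linear_subspace_span.
by move=> i si; apply/mem_span/st/mem_nth.
Qed.

Lemma orthocomp_span (s : seq V) v :
  (forall i, (i < size s)%N -> ip s`_i v = 0) -> orthocomp ip (span s) v.
Proof.
have ker_lin : linear_subspace [set u | ip u v = 0].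
  split => [|u w /= hu hw|a u /= hu]; first by rewrite /= ip0l.
    by rewrite (ipDl ipA) hu hw addr0.
  by rewrite (ipZl ipA) hu mulr0.
by move=> sv u /(span_subset ker_lin sv).
Qed.

Lemma exists_orth_proj (s : seq V) x : exists y, is_orth_proj ip (span s) x y.
Proof.
elim: s x => [|a s IH] x.
  exists 0; split; first by apply/spanE; exists (fun=> 0); rewrite big_ord0.
  by move=> u /spanE[f ->]; rewrite big_ord0 (ip0l ipA).
have sub : span s `<=` span (a :: s) by apply: span_subseq => v sv; rewrite inE sv orbT.
have [ya [sya ya_orth]] := IH a; have [yx [syx yx_orth]] := IH x.
pose b := a - ya.
have [b0|bn0] := eqVneq b 0.
  exists yx; split; first exact: sub.
  apply: orthocomp_span => -[|i] /= hi; last by apply/yx_orth/span_nth.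
  by move/eqP: b0; rewrite /b subr_eq0 => /eqP ->; apply: yx_orth.
(* one Gram-Schmidt step: remove from x - yx its component along b *)
pose c := ip b (x - yx) / ip b b.
exists (yx + c *: b); split.
  have [_ spanD spanZ] := linear_subspace_span (a :: s).
  apply: spanD; first exact: sub.
  apply: spanZ; apply: linear_subspaceB (linear_subspace_span _) _ (sub _ sya).
  by apply: mem_span; rewrite inE eqxx.
have bpos : ip b b != 0 by rewrite gt_eqF ?(ip_gt0 ipA) //; apply/eqP.
rewrite opprD addrA; apply: orthocomp_span => -[|i] /= hi.
  have ab : a = b + ya by rewrite subrK.
  rewrite [in ip a _]ab (ipDl ipA).
  rewrite !(ipBr ipA (x - yx)) !(ipZr ipA) (yx_orth _ sya) (ya_orth _ sya) /c divfK //.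
  by rewrite !subrr mulr0 subrr addr0.
have si := span_nth hi.
by rewrite (ipBr ipA (x - yx)) (ipZr ipA) (yx_orth _ si) (ya_orth _ si) mulr0 subrr.
Qed.

Definition orth_proj (s : seq V) (x : V) : V := proj1_sig (cid (exists_orth_proj s x)).

Lemma orth_projP s x : is_orth_proj ip (span s) x (orth_proj s x).
Proof. exact: proj2_sig (cid _). Qed.

Lemma hclosed_span s : hclosed ip (span s).
Proof.
move=> x sx; have [sy y_orth] := orth_projP s x; set y := orth_proj s x in sy y_orth.
have xy : x - y <> 0 by move/eqP; rewrite subr_eq0 => /eqP xy; apply: sx; rewrite xy.
exists (hnorm ip (x - y)); first by rewrite /hnorm sqrtr_gt0 ip_gt0.
move=> z + sz; rewrite /hnorm ltr_sqrt ?ip_gt0 //.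
have szy : span s (z - y) by apply: linear_subspaceB => //; apply: linear_subspace_span.
rewrite (_ : z - x = (z - y) - (x - y)); last by rewrite opprB addrA subrK.
by rewrite ip_normB // (y_orth _ szy); have := ip_ge0 ipA (z - y); lra.
Qed.

Lemma closed_subspace_span s : closed_subspace ip (span s).
Proof. by split; [apply: linear_subspace_span | apply: hclosed_span]. Qed.

Definition orth_residuals (s t : seq V) : seq V := [seq x - orth_proj t x | x <- s].

Lemma span_orth_residuals s t : span t `<=` span s ->
  span (orth_residuals s t) = span s `&` orthocomp ip (span t).
Proof.
move=> ts; apply/seteqP; split.
  apply: span_subset.
    by apply: linear_subspaceI; [apply: linear_subspace_span | apply: linear_subspace_orthocomp].
  move=> i; rewrite size_map => hi; rewrite (nth_map 0) //.
  have [/ts tp orth] := orth_projP t s`_i; split => //.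
  by apply: linear_subspaceB; [apply: linear_subspace_span | apply: span_nth | ].
move=> v [/spanE[f ev] v_orth].
pose w := \sum_(i < size s) f i *: (orth_residuals s t)`_i.
have sw : span (orth_residuals s t) w by apply/spanE; exists f; rewrite size_map.
have w_orth : orthocomp ip (span t) w.
  apply: (span_subset (linear_subspace_orthocomp _)) sw => i.
  by rewrite size_map => hi; rewrite (nth_map 0) //; case: (orth_projP t s`_i).
have svw : span t (v - w).
  have -> : v - w = \sum_(i < size s) f i *: orth_proj t s`_i.
    rewrite ev -sumrB; apply: eq_bigr => i _.
    by rewrite (nth_map 0) // scalerBr opprB addrC subrK.
  apply: (@linear_subspace_sum _ _ f (fun i => orth_proj t s`_i) (linear_subspace_span t)).
  by move=> i _; case: (orth_projP t s`_i).
suff /ip_eq0 : ip (v - w) (v - w) = 0 by move=> /(_ ipA)/eqP; rewrite subr_eq0 => /eqP ->.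
by rewrite (ipBr ipA) (v_orth _ svw) (w_orth _ svw) subrr.
Qed.

Lemma exists_nonzero_orthocomp s t z : span t `<=` span s -> span s z -> ~ span t z ->
  exists2 v, (span s `&` orthocomp ip (span t)) v & v <> 0.
Proof.
move=> ts sz tz; have [tp orth] := orth_projP t z.
exists (z - orth_proj t z); last by move/eqP; rewrite subr_eq0 => /eqP zE; apply: tz; rewrite zE.
by split => //; apply: linear_subspaceB; [apply: linear_subspace_span | | apply: ts].
Qed.

End Subspaces.

Lemma le0_of_le_mul_small (R : realFieldType) (a b : R) :
  (forall t, 0 < t -> t <= 1 -> a <= t * b) -> a <= 0.
Proof.
move=> ab; have [b0|b0] := leP b 0; first by have := ab 1 ltr01 (lexx 1); lra.
apply/ler_addgt0Pr => e e0; rewrite add0r.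
have t0 : 0 < Num.min 1 (e / b) by rewrite lt_min ltr01 divr_gt0.
have t1 : Num.min 1 (e / b) <= 1 by rewrite ge_min lexx.
apply: (le_trans (ab _ t0 t1)).
by rewrite -ler_pdivlMr // ge_min lexx orbT.
Qed.

Lemma convex_set_segment (R : realType) (V : lmodType R) (K : set V) x y (t : R) :
  convex_set K -> K x -> K y -> 0 <= t -> t <= 1 -> K (y + t *: (x - y)).
Proof.
move=> cK Kx Ky t0 t1; have := cK x y (Itv01 t0 t1); rewrite !in_setE => /(_ Kx Ky).
by rewrite /conv /= scalerBl scale1r scalerBr addrCA.
Qed.

Section NearestPoint.
Variables (R : realType) (V : lmodType R) (ip : V -> V -> R).
Hypothesis ipA : inner_product_axioms ip.
Variables (K : set V) (p : V).
Hypothesis convK : convex_set K.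

Definition hcvg (u : nat -> V) (l : V) : Prop :=
  forall eps, 0 < eps -> exists N, forall n, (N <= n)%N -> hnorm ip (u n - l) < eps.

Lemma hclosed_hcvg u l : hclosed ip K -> (forall n, K (u n)) -> hcvg u l -> K l.
Proof.
move=> clK Ku ul; apply: contrapT => Kl; have [r r0 rK] := clK l Kl.
by have [N /(_ N (leqnn N)) uN] := ul r r0; apply: rK uN (Ku N).
Qed.

Section MinimizingSequence.
Variable delta : R.
Hypothesis delta_le : forall x, K x -> delta <= ip (p - x) (p - x).
Variable xs : nat -> V.
Hypothesis Kxs : forall n, K (xs n).
Hypothesis xs_min : forall n, ip (p - xs n) (p - xs n) < delta + n.+1%:R^-1.

Lemma minimizing_cauchy eps : 0 < eps ->
  exists N, forall m n, (N <= m)%N -> (N <= n)%N -> hnorm ip (xs m - xs n) < eps.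
Proof.
move=> eps0; have eps4 : 0 < eps ^+ 2 / 4 by rewrite divr_gt0 // exprn_gt0.
have [N _ smallN] := near_infty_natSinv_lt (PosNum eps4).
exists N => m n /smallN /= mN /smallN /= nN; rewrite hnorm_lt //.
have half0 : (0 : R) <= 2^-1 by rewrite invr_ge0.
have half1 : (2^-1 : R) <= 1 by rewrite invf_le1 // ler1n.
have := xs_min m; rewrite (_ : p - xs m = (p - xs n) - (xs m - xs n)); last first.
  by rewrite opprB addrA subrK.
rewrite (ip_normB ipA (p - xs n)).
(* the midpoint of xs n and xs m lies in K, hence at distance at least delta from p *)
have := delta_le (convex_set_segment convK (Kxs m) (Kxs n) half0 half1).
rewrite opprD addrA (ip_normB ipA (p - xs n)) ipZr // ip_normZ //.
move: (xs_min n) mN nN; move: (m.+1%:R^-1) (n.+1%:R^-1) => im in_.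
lra.
Qed.

Lemma hcvg_dist_le q : hcvg xs q -> ip (p - q) (p - q) <= delta.
Proof.
move=> xs_q; apply/ler_addgt0Pr => e e0.
have M0 : 0 < 4 * (`|delta| + 1) by have := normr_ge0 delta; lra.
pose s := Num.min 1 (e / (4 * (`|delta| + 1))).
have s0 : 0 < s by rewrite lt_min ltr01 divr_gt0.
have s1 : s <= 1 by rewrite ge_min lexx.
have s_delta : s * delta <= e / 4.
  have : s * (4 * (`|delta| + 1)) <= e by rewrite -ler_pdivlMr // ge_min lexx orbT.
  have : s * delta <= s * `|delta| by apply: ler_wpM2l; [exact: ltW | exact: ler_norm].
  lra.
have se0 : 0 < s * e / 8 by rewrite divr_gt0 ?mulr_gt0.
have [N1 closeN1] : exists N, forall n, (N <= n)%N -> ip (xs n - q) (xs n - q) < s * e / 8.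
  have [N closeN] : exists N, forall n, (N <= n)%N -> hnorm ip (xs n - q) < Num.sqrt (s * e / 8).
    by apply: xs_q; rewrite sqrtr_gt0.
  by exists N => n /closeN; rewrite hnorm_lt ?sqrtr_gt0 // sqr_sqrtr ?ltW.
have e4 : 0 < e / 4 by rewrite divr_gt0.
have [N2 _ smallN2] := near_infty_natSinv_lt (PosNum e4).
pose n := maxn N1 N2.
have := ip_normD_le ipA (p - xs n) (xs n - q) s0; rewrite addrA subrK.
have := closeN1 n (leq_maxl _ _); have := smallN2 n (leq_maxr _ _); have := xs_min n.
move=> U_lt /= i_lt eta_lt.
set U := ip (p - xs n) _ in U_lt *; set eta := ip (xs n - q) _ in eta_lt *.
set i := n.+1%:R^-1 in U_lt i_lt *.
have i0 : 0 < i by rewrite invr_gt0.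
have sU : s * U <= s * (delta + i) by apply: ler_wpM2l; apply: ltW.
have si : s * i <= i by exact: ler_piMl (ltW i0) s1.
have se : s * e <= e by exact: ler_piMl (ltW e0) s1.
(* the factor 1 + s^-1 is offset by the choice eta < s * e / 8 *)
have s_eta : s^-1 * eta <= e / 8.
  by rewrite -(ler_pM2l s0) mulVKf ?gt_eqF // mulrA; apply: ltW.
lra.
Qed.

End MinimizingSequence.

Lemma exists_nearest_point : complete_ip ip -> hclosed ip K -> (exists x, K x) ->
  exists2 q, K q & forall x, K x -> ip (p - q) (p - q) <= ip (p - x) (p - x).
Proof.
move=> completeV closedK [x0 Kx0].
pose D := [set ip (p - x) (p - x) | x in K].
have infD : has_inf D.
  by split; [exists (ip (p - x0) (p - x0)), x0 | exists 0 => _ [x _ <-]; apply: ip_ge0].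
have inf_le x : K x -> inf D <= ip (p - x) (p - x) by move=> Kx; apply: (ge_inf infD.2); exists x.
have /choice[xs xsP] n : exists x, K x /\ ip (p - x) (p - x) < inf D + n.+1%:R^-1.
  have n0 : 0 < n.+1%:R^-1 :> R by rewrite invr_gt0.
  by have [_ [x Kx <-] lt_x] := inf_adherent n0 infD; exists x.
have Kxs n : K (xs n) by case: (xsP n).
have xs_min n : ip (p - xs n) (p - xs n) < inf D + n.+1%:R^-1 by case: (xsP n).
have [q xs_q] := completeV xs (minimizing_cauchy inf_le Kxs xs_min).
exists q; first exact: hclosed_hcvg closedK Kxs xs_q.
by move=> x Kx; apply: le_trans (hcvg_dist_le xs_min xs_q) (inf_le x Kx).
Qed.

Lemma nearest_point_obtuse q x : K q ->
  (forall y, K y -> ip (p - q) (p - q) <= ip (p - y) (p - y)) -> K x ->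
  ip (p - q) (x - q) <= 0.
Proof.
move=> Kq q_min Kx.
suff : 2 * ip (p - q) (x - q) <= 0 by lra.
apply: (@le0_of_le_mul_small _ _ (ip (x - q) (x - q))) => t t0 t1.
have := q_min _ (convex_set_segment convK Kx Kq (ltW t0) t1).
rewrite opprD addrA (ip_normB ipA (p - q)) ipZr // ip_normZ // => dist_le.
by rewrite -(ler_pM2l t0); lra.
Qed.

Lemma exists_separating_direction : complete_ip ip -> hclosed ip K -> ~ K p ->
  exists d, forall x, K x -> 0 < ip d (x - p).
Proof.
move=> completeV closedK Kp.
have [[x0 Kx0]|K0] := pselect (exists x, K x); last by exists 0 => x Kx; case: K0; exists x.
have [q Kq q_min] := exists_nearest_point completeV closedK (ex_intro _ x0 Kx0).
have pq : p - q <> 0 by move/eqP; rewrite subr_eq0 => /eqP pq; apply: Kp; rewrite pq.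
exists (q - p) => x Kx; have := nearest_point_obtuse Kq q_min Kx.
have -> : x - q = (x - p) - (q - p) by rewrite opprB addrA subrK.
have flip w : ip (q - p) w = - ip (p - q) w by rewrite -(ipNl ipA) opprB.
rewrite (ipBr ipA) flip -[q - p]opprB (ipNr ipA).
by have := ip_gt0 ipA pq; lra.
Qed.

End NearestPoint.

Section Chain.
Variables (T : eqType) (a : nat -> seq T) (z : seq T -> T).

Fixpoint chain n : seq T :=
  if n is k.+1 then rcons (chain k ++ a k) (z (chain k ++ a k)) else [::].

Lemma chain_subset k : {subset chain k <= chain k.+1}.
Proof. by move=> x xk; rewrite /= mem_rcons in_cons mem_cat xk orbT. Qed.

Lemma chain_subset_step k : {subset a k <= chain k.+1}.
Proof. by move=> x xa; rewrite /= mem_rcons in_cons mem_cat xa !orbT. Qed.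

Lemma chain_new k : z (chain k ++ a k) \in chain k.+1.
Proof. by rewrite /= mem_rcons mem_head. Qed.

End Chain.

Section SpanChain.
Variables (R : realType) (V : lmodType R) (ip : V -> V -> R) (N : V -> R).
Hypothesis ipA : inner_product_axioms ip.

Definition gauss_small (F0 : set V) (eps : R) : Prop :=
  forall F1, finite_dim_subspace F1 -> orthogonal_sets ip F1 F0 ->
    forall e, orthonormal_basis ip e F1 -> (gauss_prob e [set v | (eps < N v)%R] < eps%:E)%E.

Lemma measurably_adapted_span_chain (s0 : nat -> seq V) (u : nat -> V)
    (a : nat -> seq V) (z : seq V -> V) :
  (forall n, gauss_small (span (s0 n)) (2%:R ^- n)) ->
  (forall x eps, 0 < eps -> exists n, hnorm ip (x - u n) < eps) ->
  (forall s, ~ span s (z s)) ->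
  (forall k, {subset s0 k.+1 <= a k}) -> (forall k, u k \in a k) ->
  measurably_adapted ip N (fun n => span (chain a z n)).
Proof.
move=> s0_small u_dense z_new s0_a u_a.
have mono n : span (chain a z n) `<=` span (chain a z n.+1).
  exact/span_subseq/chain_subset.
have step_fin n :
    finite_dim_subspace (span (chain a z n.+1) `&` orthocomp ip (span (chain a z n))).
  by exists (orth_residuals ipA (chain a z n.+1) (chain a z n)); rewrite span_orth_residuals.
split.
- by move=> n _; apply: closed_subspace_span.
- by move=> n _; apply: mono.
- move=> n _; split; first exact: step_fin.
  apply: (exists_nonzero_orthocomp ipA (mono n) (mem_span (chain_new a z n))).
  have sub : span (chain a z n) `<=` span (chain a z n ++ a n).
    by apply: span_subseq => v vn; rewrite mem_cat vn.
  by move/sub; apply: z_new.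
- move=> x eps eps0; have [k xk] := u_dense x eps eps0.
  by exists k.+1; split => //; exists (u k) => //; apply/mem_span/chain_subset_step.
- case=> [//|k] _ e e_basis; apply: s0_small (step_fin k.+1) _ e e_basis.
  move=> v w [_ v_orth] /(span_subseq (s0_a k)) /(span_subseq (@chain_subset_step _ _ z k)) w_in.
  by rewrite (ipC ipA); apply: v_orth.
Qed.

End SpanChain.

Unset Implicit Arguments.
Set Strict Implicit.

Theorem proposition3p3 (R : realType) (V : lmodType R) (ip : V -> V -> R)
  (N : V -> R) (K : set V) (p : V) :
  hilbert_space ip ->
  measurable_norm ip N ->
  hclosed ip K -> convex_set K -> ~ K p ->
  exists F : nat -> set V,
    [/\ measurably_adapted ip N F,
        (forall n, (1 <= n)%N -> finite_dim_subspace (F n)),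
        F 1%N p,
        (forall n, (1 <= n)%N -> forall w, orthocomp ip (F n) w -> ~ K (p + w)) &
        (forall n, (1 <= n)%N -> ~ proj_image ip (F n) K p)].
Proof.
move=> [ipA completeV [u u_dense] infdim] [_ N_meas] closedK convK Kp.
have [d d_sep] := exists_separating_direction ipA convK completeV closedK Kp.
have /choice[s0 s0_small] n : exists s, gauss_small ip N (span s) (2%:R ^- n).
  have [|F0 [[s ->] F0_small]] := N_meas (2%:R ^- n); first by rewrite invr_gt0 exprn_gt0.
  by exists s.
have /choice[z z_new] (s : seq V) : exists z, ~ span s z.
  apply: contrapT => span_full; apply: infdim; exists s; apply/seteqP; split => // v _.
  by apply: contrapT => v_out; apply: span_full; exists v.
pose a k := s0 k.+1 ++ [:: p; d; u k].
have a_span k v : v \in a k -> span (chain a z k.+1) v by move/chain_subset_step/mem_span.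
have d_orth k w : orthocomp ip (span (chain a z k.+1)) w -> ip d w = 0.
  by apply; apply: a_span; rewrite mem_cat !inE eqxx !orbT.
exists (fun n => span (chain a z n)); split.
- apply: (measurably_adapted_span_chain (a := a) ipA s0_small u_dense z_new) => k.
    by move=> v s0v; rewrite /a mem_cat s0v.
  by rewrite /a mem_cat !inE eqxx !orbT.
- by move=> n _; exists (chain a z n).
- by apply: a_span; rewrite mem_cat !inE eqxx orbT.
- case=> [//|k] _ w /d_orth dw pwK.
  by have := d_sep _ pwK; rewrite addrC addKr dw ltxx.
- case=> [//|k] _ [x Kx [_ /d_orth dx]].
  by have := d_sep _ Kx; rewrite dx ltxx.
Qed.
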